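(* Let $(T,\eta,\mu)$ be a monad on $\mathbf{Set}$, $L\dashv R$ the free–forgetful adjunction with $LX=(TX,\mu_X)$, $F\colon\mathbf{Set}\to\mathbf{Set}$ a functor with distributive law $\zeta\colon TF\Rightarrow FT$ and lifting $\tilde F(A,a)=(FA,Fa\circ\zeta_A)$, $c\colon X\to FTX$ a coalgebra with $c^\#=F\mu_X\circ\zeta_{TX}\circ Tc$. Let $\Psi\colon\mathbf{Set}^{\mathrm{op}}\to\mathbf{Pos}$ have fibres with all meets preserved by reindexing, fix a $T$-algebra $(\Omega,o)$ and $d_\Omega\in\Psi\Omega$. For a $T$-algebra $A$ let $\alpha_A(S)=\bigwedge_{k\in S}\Psi(Rk)(d_\Omega)$ for $S\subseteq\mathrm{Alg}(T)(A,(\Omega,o))$, $\gamma_A(d)=\{k\mid d\preceq\Psi(Rk)(d_\Omega)\}$, $\mathrm{cl}_A=\gamma_A\circ\alpha_A$. Let $(\mathit{ev}_\lambda\colon\tilde F(\Omega,o)\to(\Omega,o))_{\lambda\in\Lambda}$ be $T$-algebra homomorphisms, $\Lambda_A(S)=\{\mathit{ev}_\lambda\circ\tilde Fh\mid\lambda\in\Lambda,h\in S\}$, $\mathcal{K}_A=\alpha_{\tilde FA}\circ\Lambda_A\circ\gamma_A$, and assume $\Lambda_{LX}(\mathrm{cl}_{LX}(S))\subseteq\mathrm{cl}_{\tilde FLX}(\Lambda_{LX}(S))$ for all $S$. Let $\alpha'_X$ be the direct image of the map $\mathbf{Set}(X,\Omega)\to\mathrm{Alg}(T)(LX,(\Omega,o))$,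 $h\mapsto o\circ Th$. Fix a set $\Theta$ of constants, each $\theta\in\Theta$ given a map $\llbracket\theta\rrbracket\colon X\to\Omega$, put $\Theta'_X=\{\llbracket\theta\rrbracket\mid\theta\in\Theta\}$ and $\Theta_{LX}=\alpha'_X(\Theta'_X)$. Consider formulas $\varphi::=\theta\mid[\lambda]\varphi$ ($\theta\in\Theta,\lambda\in\Lambda$) with semantics $\llbracket[\lambda]\varphi\rrbracket=\mathit{ev}_\lambda\circ Fo\circ FT\llbracket\varphi\rrbracket\circ c$. Let $\mathrm{be}_{LX}(d)=\Psi(Rc^\#)(\mathcal{K}_{LX}(d))\wedge\alpha_{LX}(\Theta_{LX})$ on $\Psi(TX)$. Then the logic is expressive for $\mathrm{be}_{LX}$: $\alpha_{LX}\big(\alpha'_X(\{\llbracket\varphi\rrbracket\mid\varphi\text{ a formula}\})\big)=\nu\,\mathrm{be}_{LX}$.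
   Context: $\nu\,\mathrm{be}_{LX}$ is the greatest fixpoint of $\mathrm{be}_{LX}$ w.r.t. $\preceq$ in the complete lattice $\Psi(TX)$. A distributive law satisfies $\zeta_X\circ\eta_{FX}=F\eta_X$ and $\zeta_X\circ\mu_{FX}=F\mu_X\circ\zeta_{TX}\circ T\zeta_X$. *)

Record Monad := {
  T : Type -> Type;
  Tmap : forall A B : Type, (A -> B) -> T A -> T B;
  eta : forall A : Type, A -> T A;
  mu : forall A : Type, T (T A) -> T A;
  Tmap_id : forall A (x : T A), Tmap _ _ (fun a => a) x = x;
  Tmap_comp : forall A B C (f : A -> B) (g : B -> C) (x : T A),
    Tmap _ _ (fun a => g (f a)) x = Tmap _ _ g (Tmap _ _ f x);
  eta_nat : forall A B (f : A -> B) (a : A), Tmap _ _ f (eta _ a) = eta _ (f a);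
  mu_nat : forall A B (f : A -> B) (x : T (T A)),
    Tmap _ _ f (mu _ x) = mu _ (Tmap _ _ (Tmap _ _ f) x);
  mu_eta_l : forall A (x : T A), mu _ (eta _ x) = x;
  mu_eta_r : forall A (x : T A), mu _ (Tmap _ _ (eta A) x) = x;
  mu_assoc : forall A (x : T (T (T A))), mu _ (mu _ x) = mu _ (Tmap _ _ (mu A) x)
}.
Arguments Tmap {m A B} f x.
Arguments eta {m A} a.
Arguments mu {m A} x.

Record Functor := {
  Fo : Type -> Type;
  Fmap : forall A B : Type, (A -> B) -> Fo A -> Fo B;
  Fmap_id : forall A (x : Fo A), Fmap _ _ (fun a => a) x = x;
  Fmap_comp : forall A B C (f : A -> B) (g : B -> C) (x : Fo A),
    Fmap _ _ (fun a => g (f a)) x = Fmap _ _ g (Fmap _ _ f x)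
}.
Arguments Fmap {f A B} _ _ : rename.

Record DistrLaw (M : Monad) (Fn : Functor) := {
  zeta : forall A : Type, T M (Fo Fn A) -> Fo Fn (T M A);
  zeta_nat : forall A B (f : A -> B) (x : T M (Fo Fn A)),
    zeta _ (Tmap (Fmap f) x) = Fmap (Tmap f) (zeta _ x);
  zeta_eta : forall A (x : Fo Fn A), zeta _ (eta x) = Fmap (@eta M A) x;
  zeta_mu : forall A (x : T M (T M (Fo Fn A))),
    zeta _ (mu x) = Fmap (@mu M A) (zeta _ (Tmap (zeta A) x))
}.
Arguments zeta {M Fn} d {A} x.

Set Implicit Arguments.
Unset Strict Implicit.

Definition IsAlg (M : Monad) (A : Type) (a : T M A -> A) : Prop :=
  (forall x : A, a (eta x) = x) /\
  (forall x : T M (T M A), a (Tmap a x) = a (mu x)).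

Definition IsAlgHom (M : Monad) (A B : Type) (a : T M A -> A) (b : T M B -> B)
  (f : A -> B) : Prop :=
  forall x : T M A, f (a x) = b (Tmap f x).

(** Structure map of the lifting  F~(A,a) = (FA, Fa o zeta_A). *)
Definition Flift (M : Monad) (Fn : Functor) (z : DistrLaw M Fn) (A : Type)
  (a : T M A -> A) : T M (Fo Fn A) -> Fo Fn A :=
  fun x => Fmap a (zeta z x).

Unset Implicit Arguments.
Record Fibration := {
  P : Type -> Type;
  le : forall X : Type, P X -> P X -> Prop;
  le_refl : forall X (x : P X), le _ x x;
  le_trans : forall X (x y z : P X), le _ x y -> le _ y z -> le _ x z;
  le_antisym : forall X (x y : P X), le _ x y -> le _ y x -> x = y;
  meet : forall X : Type, (P X -> Prop) -> P X;
  meet_lb : forall X (S : P X -> Prop) x, S x -> le _ (meet _ S) x;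
  meet_glb : forall X (S : P X -> Prop) y,
    (forall x, S x -> le _ y x) -> le _ y (meet _ S);
  reindex : forall X Y : Type, (X -> Y) -> P Y -> P X;
  reindex_mono : forall X Y (f : X -> Y) (d e : P Y),
    le _ d e -> le _ (reindex _ _ f d) (reindex _ _ f e);
  reindex_id : forall X (d : P X), reindex _ _ (fun x => x) d = d;
  reindex_comp : forall X Y Z (f : X -> Y) (g : Y -> Z) (d : P Z),
    reindex _ _ (fun x => g (f x)) d = reindex _ _ f (reindex _ _ g d);
  reindex_meet : forall X Y (f : X -> Y) (S : P Y -> Prop),
    reindex _ _ f (meet _ S) = meet _ (fun d => exists e, S e /\ d = reindex _ _ f e)
}.
Arguments le {f X} _ _ : rename.
Arguments meet {f X} _ : rename.
Arguments reindex {f X Y} _ _ : rename.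
Set Implicit Arguments.

Definition binmeet (Ps : Fibration) (X : Type) (a b : P Ps X) : P Ps X :=
  meet (fun d => d = a \/ d = b).

(** Subsets of Alg(T)(A,(Omega,o)) are represented as predicates on the
    underlying maps A -> Omega (only homomorphisms are ever put in them). *)
Section Galois.
Variables (M : Monad) (Ps : Fibration) (Omega : Type) (o : T M Omega -> Omega)
  (dOmega : P Ps Omega).

Definition alphaA (A : Type) (S : (A -> Omega) -> Prop) : P Ps A :=
  meet (fun d => exists k, S k /\ d = reindex k dOmega).

Definition gammaA (A : Type) (a : T M A -> A) (d : P Ps A) : (A -> Omega) -> Prop :=
  fun k => IsAlgHom a o k /\ le d (reindex k dOmega).

Definition clA (A : Type) (a : T M A -> A) (S : (A -> Omega) -> Prop)
  : (A -> Omega) -> Prop := gammaA a (alphaA S).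
End Galois.

Section Logic.
Variables (M : Monad) (Fn : Functor) (z : DistrLaw M Fn) (Ps : Fibration)
  (Omega : Type) (o : T M Omega -> Omega) (dOmega : P Ps Omega)
  (Lam : Type) (ev : Lam -> Fo Fn Omega -> Omega).

Definition LambdaA (A : Type) (S : (A -> Omega) -> Prop) : (Fo Fn A -> Omega) -> Prop :=
  fun g => exists (l : Lam) (h : A -> Omega), S h /\ g = (fun y => ev l (Fmap h y)).

Definition KA (A : Type) (a : T M A -> A) (d : P Ps A) : P Ps (Fo Fn A) :=
  alphaA dOmega (LambdaA (gammaA o dOmega a d)).

Definition alpha' (X : Type) (S : (X -> Omega) -> Prop) : (T M X -> Omega) -> Prop :=
  fun g => exists h : X -> Omega, S h /\ g = (fun t => o (Tmap h t)).

Definition csharp (X : Type) (c : X -> Fo Fn (T M X)) : T M X -> Fo Fn (T M X) :=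
  fun t => Fmap (@mu M X) (zeta z (Tmap c t)).

Variables (Theta : Type) (X : Type) (c : X -> Fo Fn (T M X)) (cst : Theta -> X -> Omega).

Inductive formula : Type :=
| fConst : Theta -> formula
| fBox : Lam -> formula -> formula.

Fixpoint sem (phi : formula) : X -> Omega :=
  match phi with
  | fConst th => cst th
  | fBox l psi => fun x => ev l (Fmap o (Fmap (Tmap (sem psi)) (c x)))
  end.

Definition ThetaLX : (T M X -> Omega) -> Prop :=
  alpha' (fun h => exists th : Theta, h = cst th).

Definition be (d : P Ps (T M X)) : P Ps (T M X) :=
  binmeet (reindex (csharp c) (KA (@mu M X) d)) (alphaA dOmega ThetaLX).
End Logic.

Definition IsGreatestFixpoint (Ps : Fibration) (Y : Type) (f : P Ps Y -> P Ps Y)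
  (v : P Ps Y) : Prop :=
  f v = v /\ (forall y, f y = y -> le y v).

From Stdlib Require Import FunctionalExtensionality.

(* The formula theory [v] is the meet of the predicates [Psi(o o T[[phi]])(d_Omega)].
   Every formula is a constant or a box, and the free extension of [[ [l]phi ]]
   is [ev_l o F(o o T[[phi]]) o c^#]; hence [be v <= v]. Conversely the
   compatibility of [Lambda] with the closure [cl] makes [K(v)] dominate the
   box generators, so [v <= be v]. Finally, induction on formulas puts every
   post-fixpoint of [be] below each generator of [v]. *)

Section GaloisConnection.
Variables (Ps : Fibration) (Omega : Type) (dOmega : P Ps Omega).

Lemma alphaA_lb (A : Type) (S : (A -> Omega) -> Prop) (k : A -> Omega) :
  S k -> le (alphaA dOmega S) (reindex k dOmega).
Proof. intro Sk. apply meet_lb. exists k. auto. Qed.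

Lemma alphaA_glb (A : Type) (S : (A -> Omega) -> Prop) (y : P Ps A) :
  (forall k, S k -> le y (reindex k dOmega)) -> le y (alphaA dOmega S).
Proof. intro H. apply meet_glb. intros d [k [Sk ->]]. auto. Qed.

Lemma alphaA_anti (A : Type) (S S' : (A -> Omega) -> Prop) :
  (forall k, S k -> S' k) -> le (alphaA dOmega S') (alphaA dOmega S).
Proof. intro sub. apply alphaA_glb. intros k Sk. apply alphaA_lb. auto. Qed.

Lemma alphaA_le_cl (M : Monad) (o : T M Omega -> Omega) (A : Type) (a : T M A -> A)
  (S : (A -> Omega) -> Prop) :
  le (alphaA dOmega S) (alphaA dOmega (clA o dOmega a S)).
Proof. apply alphaA_glb. intros k [_ H]. exact H. Qed.

Lemma le_reindex_alphaA (A B : Type) (f : A -> B) (S : (B -> Omega) -> Prop)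
  (y : P Ps A) :
  (forall k, S k -> le y (reindex (fun x => k (f x)) dOmega)) ->
  le y (reindex f (alphaA dOmega S)).
Proof.
  intro H. unfold alphaA. rewrite reindex_meet.
  apply meet_glb. intros d [e [[k [Sk ->]] ->]].
  rewrite <- reindex_comp. auto.
Qed.
End GaloisConnection.

Section FreeExtension.
Variables (M : Monad) (Omega : Type) (o : T M Omega -> Omega) (Ho : IsAlg o).

Local Notation ext h := (fun t => o (Tmap h t)).

Lemma free_ext_hom (Y : Type) (h : Y -> Omega) : IsAlgHom (@mu M Y) o (ext h).
Proof.
  intro x. rewrite mu_nat, <- (proj2 Ho), <- Tmap_comp. reflexivity.
Qed.

Variables (Fn : Functor) (z : DistrLaw M Fn) (X : Type) (c : X -> Fo Fn (T M X))
  (ev : Fo Fn Omega -> Omega) (Hev : IsAlgHom (Flift z o) o ev).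

Lemma free_ext_box (h : X -> Omega) :
  ext (fun x => ev (Fmap o (Fmap (Tmap h) (c x)))) =
  (fun t => ev (Fmap (ext h) (csharp z c t))).
Proof.
  apply functional_extensionality; intro t. unfold Flift, csharp in *.
  rewrite (Tmap_comp M _ _ _ _ ev), <- Hev.
  rewrite (Tmap_comp M _ _ _ _ (Fmap o)), (Tmap_comp M _ _ _ c), !zeta_nat.
  rewrite <- !Fmap_comp. do 2 f_equal.
  apply functional_extensionality; intro w.
  rewrite (proj2 Ho), mu_nat. reflexivity.
Qed.
End FreeExtension.

Section Expressivity.
Variables (M : Monad) (Fn : Functor) (z : DistrLaw M Fn) (Ps : Fibration)
  (Omega : Type) (o : T M Omega -> Omega) (Ho : IsAlg o) (dOmega : P Ps Omega)
  (Lam : Type) (ev : Lam -> Fo Fn Omega -> Omega)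
  (Hev : forall l : Lam, IsAlgHom (Flift z o) o (ev l))
  (X : Type) (c : X -> Fo Fn (T M X)) (Theta : Type) (cst : Theta -> X -> Omega).

Local Notation sem := (sem o ev c cst).
Local Notation be := (be z o dOmega ev c cst).
Local Notation gen phi := (reindex (fun t => o (Tmap (sem phi) t)) dOmega).

Definition theory_maps : (T M X -> Omega) -> Prop :=
  alpha' o (fun h => exists phi : formula Lam Theta, h = sem phi).

Local Notation theory := (alphaA dOmega theory_maps).

Lemma theory_maps_hom (k : T M X -> Omega) :
  theory_maps k -> IsAlgHom (@mu M X) o k.
Proof. intros [h [_ ->]]. apply free_ext_hom; auto. Qed.

Lemma theory_le_sem (phi : formula Lam Theta) : le theory (gen phi).
Proof. apply alphaA_lb. exists (sem phi). split; [exists phi |]; reflexivity. Qed.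

Lemma le_theory (y : P Ps (T M X)) :
  (forall phi, le y (gen phi)) -> le y theory.
Proof. intro H. apply alphaA_glb. intros k [h [[phi ->] ->]]. auto. Qed.

Lemma be_le_const (y : P Ps (T M X)) (th : Theta) :
  le (be y) (gen (fConst Lam th)).
Proof.
  eapply le_trans; [apply meet_lb; right; reflexivity |].
  apply alphaA_lb. exists (cst th). split; [exists th |]; reflexivity.
Qed.

Lemma be_le_box (y : P Ps (T M X)) (l : Lam) (psi : formula Lam Theta) :
  le y (gen psi) -> le (be y) (gen (fBox l psi)).
Proof.
  intro y_psi.
  eapply le_trans; [apply meet_lb; left; reflexivity |].
  simpl sem. rewrite (@free_ext_box _ _ _ Ho _ z) by auto.
  set (k := fun t => o (Tmap (sem psi) t)).
  rewrite (reindex_comp Ps _ _ _ (csharp z c) (fun w => ev l (Fmap k w))).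
  apply reindex_mono, alphaA_lb. exists l, k.
  split; [| reflexivity]. split; [apply free_ext_hom; auto | exact y_psi].
Qed.

Lemma postfix_le_theory (y : P Ps (T M X)) : le y (be y) -> le y theory.
Proof.
  intro y_be. apply le_theory.
  induction phi as [th | l psi IH]; apply le_trans with (1 := y_be).
  - apply be_le_const.
  - apply be_le_box, IH.
Qed.

Lemma be_theory_le : le (be theory) theory.
Proof.
  apply le_theory. intros [th | l psi].
  - apply be_le_const.
  - apply be_le_box, theory_le_sem.
Qed.

Lemma theory_le_Theta : le theory (alphaA dOmega (ThetaLX o cst)).
Proof.
  apply alphaA_anti. intros k [h [[th ->] ->]].
  exists (cst th). split; [exists (fConst Lam th) |]; reflexivity.
Qed.

Hypothesis Hcl : forall S : (T M X -> Omega) -> Prop,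
  (forall k, S k -> IsAlgHom (@mu M X) o k) ->
  forall g, LambdaA ev (clA o dOmega (@mu M X) S) g ->
    clA o dOmega (Flift z (@mu M X)) (LambdaA ev S) g.

(* [K(v) = alpha(Lambda(cl D)) >= alpha(cl(Lambda D)) >= alpha(Lambda D)], where [D]
   generates [v]; the last meet is reindexed along [c^#] into box generators. *)
Lemma theory_le_K :
  le theory (reindex (csharp z c) (KA o dOmega ev (@mu M X) theory)).
Proof.
  eapply le_trans; [| apply reindex_mono, alphaA_anti, Hcl, theory_maps_hom].
  eapply le_trans; [| apply reindex_mono, alphaA_le_cl].
  apply le_reindex_alphaA. intros g [l [k [[h [[phi ->] ->]] ->]]].
  rewrite <- (@free_ext_box _ _ _ Ho _ z) by auto. exact (theory_le_sem (fBox l phi)).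
Qed.

Lemma theory_le_be : le theory (be theory).
Proof.
  apply meet_glb. intros d [-> | ->].
  - exact theory_le_K.
  - exact theory_le_Theta.
Qed.
End Expressivity.

Theorem corollary1
  (M : Monad) (Fn : Functor) (z : DistrLaw M Fn) (Ps : Fibration)
  (Omega : Type) (o : T M Omega -> Omega) (Ho : IsAlg o)
  (dOmega : P Ps Omega)
  (Lam : Type) (ev : Lam -> Fo Fn Omega -> Omega)
  (Hev : forall l : Lam, IsAlgHom (Flift z o) o (ev l))
  (X : Type) (c : X -> Fo Fn (T M X))
  (Hcl : forall S : (T M X -> Omega) -> Prop,
     (forall k, S k -> IsAlgHom (@mu M X) o k) ->
     forall g, LambdaA ev (clA o dOmega (@mu M X) S) g ->
       clA o dOmega (Flift z (@mu M X)) (LambdaA ev S) g)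
  (Theta : Type) (cst : Theta -> X -> Omega) :
  IsGreatestFixpoint
    (be z o dOmega ev c cst)
    (alphaA dOmega (alpha' o (fun h => exists phi : formula Lam Theta, h = sem o ev c cst phi))).
Proof.
  split.
  - apply le_antisym; [apply be_theory_le | apply theory_le_be]; assumption.
  - intros y fix_y. apply postfix_le_theory with (z := z); [assumption.. |].
    rewrite fix_y. apply le_refl.
Qed.
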